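(* Assume that the exact relative presentation $X_\infty$ satisfies a linear isoperimetric inequality of factor $K$. If $s\in S$ represents an element $a\in H_i$, then $\|a\|\le 12K$, i.e. the word length of $a$ with respect to $S_i$ is at most $12K$.
   Context: Setting. $G=\langle S\mid\mathcal R\rangle$ is a finite presentation with $S$ finite symmetric and relators of length 2 or 3. $H_1,\dots,H_n\le G$, and $S_i\subset S$ is a finite symmetric generating set of $H_i$. $X_\infty$ has generating set $\hat S=S\sqcup H_1\sqcup\dots\sqcup H_n$ (every element of every $H_i$ is a letter) and relators: - the words of $\mathcal R$; - the words $\tilde s^{-1}s$ for $s\in S_i$, where $\tilde s$ is the letter of $H_i$ corresponding to $s$; - for each $i$, all words of at most 3 letters of $H_i$ whose product is trivial in $H_i$. $X_\infty$ satisfies a linear isoperimetric inequality of factor $K$ if every word $w$ over $\hat S$ trivial in $G$ has a Van Kampen diagram over $X_\infty$ with at most $K\,\mathrm{length}(w)$ 2-cells. For $a\in H_i$, the complexity $\|a\|$ is the word length of $a$ with respect to $S_i$. *)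

From Stdlib Require Import Relations.
From Stdlib Require List.
From mathcomp Require Import all_boot all_order all_algebra.
Set Implicit Arguments. Unset Strict Implicit. Unset Printing Implicit Defensive.

Definition is_group (G : Type) (mul : G -> G -> G) (one : G) (inv : G -> G) :=
  [/\ (forall x y z, mul x (mul y z) = mul (mul x y) z),
      (forall x, mul one x = x), (forall x, mul x one = x),
      (forall x, mul (inv x) x = one) & (forall x, mul x (inv x) = one)].

Definition is_subgroup (G : Type) (mul : G -> G -> G) (one : G) (inv : G -> G)
  (H : G -> Prop) :=
  [/\ H one, (forall x y, H x -> H y -> H (mul x y)) & (forall x, H x -> H (inv x))].

Definition gprod (G : Type) (mul : G -> G -> G) (one : G) (l : seq G) : G :=
  foldr mul one l.

(* (x, true) is the letter x, (x, false) is its formal inverse x^{-1}. *)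
Definition sinv (A : Type) (x : A * bool) : A * bool := (x.1, ~~ x.2).
Definition winv (A : Type) (w : seq (A * bool)) : seq (A * bool) :=
  rev (map (@sinv A) w).
Definition posw (A : Type) (w : seq A) : seq (A * bool) := map (fun x => (x, true)) w.

Inductive free_step (A : Type) : seq (A * bool) -> seq (A * bool) -> Prop :=
  | FreeStep (u v : seq (A * bool)) (x : A * bool) :
      free_step (u ++ x :: sinv x :: v) (u ++ v).

Definition freeq (A : Type) : relation (seq (A * bool)) :=
  clos_refl_sym_trans _ (@free_step A).

Definition weval (A G : Type) (mul : G -> G -> G) (one : G) (inv : G -> G)
  (f : A -> G) (w : seq (A * bool)) : G :=
  foldr (fun x acc => mul (if x.2 then f x.1 else inv (f x.1)) acc) one w.

Definition conj_prod (A : Type)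
  (cs : seq (seq (A * bool) * seq (A * bool) * bool)) : seq (A * bool) :=
  flatten [seq c.1.1 ++ (if c.2 then c.1.2 else winv c.1.2) ++ winv c.1.1 | c <- cs].

(* [area_le valid Rel w N]: w is, in the free group over the (valid) letters,
   a product of at most N conjugates of relators (from Rel) or their inverses;
   by van Kampen's lemma this is the same as the existence of a van Kampen
   diagram for w over the presentation with at most N 2-cells. *)
Definition area_le (A : Type) (valid : A -> Prop) (Rel : seq (A * bool) -> Prop)
  (w : seq (A * bool)) (N : nat) : Prop :=
  exists cs : seq (seq (A * bool) * seq (A * bool) * bool),
    [/\ size cs <= N,
        List.Forall (fun c => Rel c.1.2 /\ List.Forall (fun x => valid x.1) c.1.1) cs
      & freeq w (conj_prod cs)].

(* letters of \hat S = S \sqcup H_1 \sqcup ... \sqcup H_n ;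
   [LH i a] is the letter of H_i corresponding to a (valid only if a \in H_i) *)
Inductive letter (S G : Type) (n : nat) : Type :=
  | LS of S
  | LH of 'I_n & G.
Arguments LS {S G n}.
Arguments LH {S G n}.

Section Xinf.
Variables (G : Type) (mul : G -> G -> G) (one : G) (inv : G -> G).
Variables (S : finType) (ev : S -> G) (R : seq (seq S)) (n : nat)
          (H : 'I_n -> G -> Prop) (Si : 'I_n -> {set S}).

Definition valid_letter (x : letter S G n) : Prop :=
  match x with LS _ => True | LH i a => H i a end.

Definition letter_val (x : letter S G n) : G :=
  match x with LS s => ev s | LH _ a => a end.

Definition Xinf_rel (r : seq (letter S G n * bool)) : Prop :=
  [\/ exists2 r0, r0 \in R & r = posw [seq LS s | s <- r0],
      exists i s, s \in Si i /\ r = [:: (LH i (ev s), false); (LS s, true)]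
    | exists i (l : seq G), [/\ List.Forall (H i) l, size l <= 3,
                               gprod mul one l = one & r = posw [seq LH i a | a <- l]]].

Definition Xinf_linear_isoperimetric (R' : realFieldType) (K : R') : Prop :=
  forall w : seq (letter S G n),
    List.Forall valid_letter w ->
    weval mul one inv letter_val (posw w) = one ->
    exists N : nat, (N%:R <= K * (size w)%:R)%R /\
                    area_le valid_letter Xinf_rel (posw w) N.
End Xinf.

From mathcomp Require Import all_boot all_order all_algebra zify lra boolp.
Import Order.TTheory GRing.Theory Num.Theory.

Set Implicit Arguments.
Unset Strict Implicit.
Unset Printing Implicit Defensive.

(* The relation [s = a] gives a word [s a^-1] of length 2 over
   X_infty, hence a van Kampen diagram with at most [2K] cells.  Walk along a
   boundary word in G starting at 1 and add up the changes of the S_i-word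
   length [|.|_i] of the current vertex across the H_i-letters only.  This
   "gain" is invariant under free reduction, vanishes on conjugates of the
   relators of G and of the triangle relators of H_i, and is at most 1 in
   absolute value on the relators [s~^-1 s] (by symmetry of S_i).  Hence
   the gain of [s a^-1], which is [-|a|_i], is bounded by the area, so
   [|a|_i <= 2K <= 12K].  The word length is truncated at [area + 1] so
   that it is defined on all of G. *)

Lemma gprod_cat (G : Type) (mul : G -> G -> G) (one : G) (inv : G -> G)
  (l1 l2 : seq G) :
  is_group mul one inv ->
  gprod mul one (l1 ++ l2) = mul (gprod mul one l1) (gprod mul one l2).
Proof.
case=> mulA mul1g _ _ _; elim: l1 => [|x l IH] /=; first by rewrite mul1g.
by rewrite IH mulA.
Qed.

Section PotentialGain.

Variables (G A : Type) (mul : G -> G -> G) (one : G) (inv : G -> G).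
Hypothesis groupG : is_group mul one inv.
Variables (f : A -> G) (counted : A -> bool) (phi : G -> int).

Definition wstep (g : G) (x : A * bool) : G :=
  mul g (if x.2 then f x.1 else inv (f x.1)).

Definition wend (g : G) (w : seq (A * bool)) : G := foldl wstep g w.

Fixpoint gain (g : G) (w : seq (A * bool)) : int :=
  if w is x :: w' then
    ((if counted x.1 then phi (wstep g x) - phi g else 0) + gain (wstep g x) w')%R
  else 0%R.

Lemma wend_cat g u v : wend g (u ++ v) = wend (wend g u) v.
Proof. exact: foldl_cat. Qed.

Lemma gain_cat g u v : gain g (u ++ v) = (gain g u + gain (wend g u) v)%R.
Proof. by elim: u g => [|x u IH] g /=; rewrite ?add0r // IH addrA. Qed.

Lemma wend_weval g w : wend g w = mul g (weval mul one inv f w).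
Proof.
have [mulA _ mulg1 _ _] := groupG.
by elim: w g => [|x w IH] g /=; rewrite ?mulg1 // IH /wstep mulA.
Qed.

Lemma wstep_sinv g x : wstep (wstep g x) (sinv x) = g.
Proof.
have [mulA _ mulg1 mulVg mulgV] := groupG.
by rewrite /wstep /sinv /=; case: x.2; rewrite /= -mulA ?mulgV ?mulVg mulg1.
Qed.

Lemma gain_free_step g w1 w2 : free_step w1 w2 -> gain g w1 = gain g w2.
Proof.
case=> u v x; rewrite !gain_cat /= wstep_sinv /sinv /=.
by case: (counted x.1); lia.
Qed.

Lemma gain_freeq g w1 w2 : freeq w1 w2 -> gain g w1 = gain g w2.
Proof.
elim=> [x y /gain_free_step|x|x y _ ->|x y z _ -> _ ->] //; exact.
Qed.

Lemma wend_gain_winv g u :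
  wend (wend g u) (winv u) = g /\ gain (wend g u) (winv u) = (- gain g u)%R.
Proof.
elim: u g => [|x u IH] g; first by rewrite oppr0.
rewrite /winv /= rev_cons -cats1 -/(winv u) wend_cat gain_cat.
have [-> ->] := IH (wstep g x); rewrite /= wstep_sinv; split=> //.
by rewrite /sinv /=; case: (counted x.1); lia.
Qed.

Lemma wend_gain_conjugate g u r :
  (forall h, wend h r = h) ->
  wend g (u ++ r ++ winv u) = g /\ gain g (u ++ r ++ winv u) = gain (wend g u) r.
Proof.
move=> r_closed; have [endK gainK] := wend_gain_winv g u.
rewrite !wend_cat !gain_cat r_closed endK gainK; split=> //.
by rewrite addrCA addrA addrK.
Qed.

Lemma gain_conj_prod (Rel : seq (A * bool) -> Prop) cs g :
  (forall r, Rel r -> forall h, wend h r = h) ->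
  (forall r, Rel r -> forall h, (`|gain h r| <= 1)%R) ->
  List.Forall (fun c => Rel c.1.2) cs ->
  (`|gain g (conj_prod cs)| <= (size cs)%:Z)%R.
Proof.
move=> Rel_closed Rel_gain; elim: cs => [|[[u r] e] cs IH] //.
case/List.Forall_cons_iff=> /= Rel_r /IH {}IH.
have [r'_gain r'_closed] :
    (`|gain (wend g u) (if e then r else winv r)| <= 1)%R /\
    forall h, wend h (if e then r else winv r) = h.
  case: e; first by split; [exact: Rel_gain | exact: Rel_closed].
  split=> [|h].
  - have [_ gainK] := wend_gain_winv (wend g u) r.
    by rewrite (Rel_closed _ Rel_r) in gainK; rewrite gainK normrN Rel_gain.
  - by have [endK _] := wend_gain_winv h r; rewrite (Rel_closed _ Rel_r) in endK.
have -> : conj_prod (((u, r), e) :: cs) =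
          (u ++ (if e then r else winv r) ++ winv u) ++ conj_prod cs by [].
rewrite gain_cat; have [-> ->] := wend_gain_conjugate g u r'_closed.
lia.
Qed.

Lemma gain_all_counted g w :
  all (fun x => counted x.1) w -> gain g w = (phi (wend g w) - phi g)%R.
Proof.
elim: w g => [|x w IH] g /=; first by rewrite subrr.
by case/andP=> -> /IH ->; rewrite /wend /=; lia.
Qed.

Lemma gain_none_counted g w : all (fun x => ~~ counted x.1) w -> gain g w = 0%R.
Proof.
elim: w g => [|x w IH] g //=.
by case/andP=> /negbTE -> /IH ->; rewrite addr0.
Qed.

End PotentialGain.

Section TruncatedWordLength.

Variables (G : Type) (mul : G -> G -> G) (one : G) (inv : G -> G).
Hypothesis groupG : is_group mul one inv.
Variables (S : finType) (ev : S -> G) (T : {set S}) (B : nat).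

Definition spells (k : nat) (g : G) : Prop :=
  exists l : seq S,
    [/\ size l = k, all (fun t => t \in T) l & gprod mul one (map ev l) = g].

(* The T-word length of [g] if it is below [B], and [B] otherwise (in
   particular when [g] is not a product of letters of T). *)
Definition twlen (g : G) : nat := find (fun k => `[< spells k g >]) (iota 0 B).

Lemma twlen_le_bound g : twlen g <= B.
Proof. by rewrite -[B](size_iota 0) find_size. Qed.

Lemma twlen_spells g : twlen g < B -> spells (twlen g) g.
Proof.
move=> lt_gB; have := lt_gB; rewrite -[B in _ < B](size_iota 0) -has_find.
by move/(nth_find 0); rewrite nth_iota // add0n => /asboolP.
Qed.

Lemma twlen_min k g : k < B -> spells k g -> twlen g <= k.
Proof.
move=> lt_kB spells_kg; rewrite leqNgt; apply/negP => /(before_find 0).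
by rewrite nth_iota // add0n (asboolT spells_kg).
Qed.

Lemma twlen_one : 0 < B -> twlen one = 0.
Proof. by move=> B_gt0; apply/eqP; rewrite -leqn0 twlen_min //; exists [::]. Qed.

Lemma twlen_mulr g t : t \in T -> twlen (mul g (ev t)) <= (twlen g).+1.
Proof.
have [_ _ mulg1 _ _] := groupG.
move=> Tt; case: (ltnP (twlen g).+1 B) => [lt_gB|le_Bg]; last first.
  exact: leq_trans (twlen_le_bound _) le_Bg.
have [l [size_l Tl prod_l]] := twlen_spells (ltnW lt_gB).
apply: twlen_min => //; exists (rcons l t); split.
- by rewrite size_rcons size_l.
- by rewrite all_rcons Tt.
- by rewrite -cats1 map_cat (gprod_cat _ _ groupG) /= mulg1 prod_l.
Qed.

Hypothesis T_sym : forall t, t \in T -> exists2 t', t' \in T & ev t' = inv (ev t).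

Lemma twlen_mulr_dist g t :
  t \in T -> (`|(twlen (mul g (ev t)))%:Z - (twlen g)%:Z| <= 1)%R.
Proof.
have [mulA _ mulg1 _ mulgV] := groupG.
move=> Tt; have [t' T't' ev_t'] := T_sym Tt.
have := twlen_mulr (mul g (ev t)) T't'.
rewrite ev_t' -mulA mulgV mulg1; have := twlen_mulr g Tt; lia.
Qed.

End TruncatedWordLength.

Section XinfGain.

Variables (G : Type) (mul : G -> G -> G) (one : G) (inv : G -> G).
Hypothesis groupG : is_group mul one inv.
Variables (S : finType) (ev : S -> G) (R : seq (seq S)) (n : nat)
  (H : 'I_n -> G -> Prop) (Si : 'I_n -> {set S}).
Hypothesis R_trivial : forall r, r \in R -> gprod mul one (map ev r) = one.
Hypothesis Si_sym :
  forall i s, s \in Si i -> exists2 s', s' \in Si i & ev s' = inv (ev s).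
Variables (i : 'I_n) (B : nat).

Definition in_factor (x : letter S G n) : bool :=
  if x is LH j _ then j == i else false.

Local Notation val := (letter_val ev (n := n)).
Local Notation Xrel := (Xinf_rel mul one ev R H Si).
Local Notation phi := (fun g => Posz (twlen mul one ev (Si i) B g)).

Lemma weval_posw_LS (l : seq S) :
  weval mul one inv val (posw [seq LS t | t <- l]) = gprod mul one (map ev l).
Proof. by elim: l => //= t l ->. Qed.

Lemma weval_posw_LH j (l : seq G) :
  weval mul one inv val (posw [seq LH j a | a <- l]) = gprod mul one l.
Proof. by elim: l => //= a l ->. Qed.

Lemma wend_Xinf_rel r : Xrel r -> forall h, wend mul inv val h r = h.
Proof.
have [_ _ mulg1 mulVg _] := groupG.
move=> rel_r h; rewrite (wend_weval groupG) -[RHS]mulg1; congr (mul h _).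
case: rel_r => [[r0 Rr0 ->]|[j [t [_ ->]]]|[j [l [_ _ prod_l ->]]]].
- by rewrite weval_posw_LS R_trivial.
- by rewrite /= mulg1 mulVg.
- by rewrite weval_posw_LH.
Qed.

Lemma gain_Xinf_rel r :
  Xrel r -> forall h, (`|gain mul inv val in_factor phi h r| <= 1)%R.
Proof.
case=> [[r0 _ ->]|[j [t [Sj_t ->]]]|[j [l [_ _ prod_l ->]]]] h.
- by rewrite gain_none_counted //; elim: r0.
- rewrite /= /wstep /=; case: eqP => [ji|_] //; subst j.
  have [t' Si_t' <-] := Si_sym Sj_t.
  have := twlen_mulr_dist groupG B (@Si_sym i) h Si_t'; lia.
- have [->|ne_ji] := eqVneq j i; last first.
    by rewrite gain_none_counted //; elim: l {prod_l} => //= a l ->; rewrite ne_ji.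
  rewrite gain_all_counted; last by elim: l {prod_l} => //= a l ->; rewrite eqxx.
  rewrite (wend_weval groupG) weval_posw_LH prod_l.
  by have [_ _ -> _ _] := groupG; rewrite subrr.
Qed.

Lemma gain_le_area w N g :
  area_le (valid_letter H) Xrel w N ->
  (`|gain mul inv val in_factor phi g w| <= N%:Z)%R.
Proof.
case=> cs [size_cs Rel_cs w_cs]; rewrite (gain_freeq groupG _ _ _ _ w_cs).
apply: le_trans (gain_conj_prod groupG (Rel := Xrel) g _ _ _) _.
- exact: wend_Xinf_rel.
- exact: gain_Xinf_rel.
- by apply: List.Forall_impl Rel_cs => c [].
- by rewrite lez_nat.
Qed.

End XinfGain.

Theorem lemma3p4
  (R' : realFieldType) (K : R')
  (G : Type) (mul : G -> G -> G) (one : G) (inv : G -> G)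
  (S : finType) (ev : S -> G) (R : seq (seq S)) (n : nat)
  (H : 'I_n -> G -> Prop) (Si : 'I_n -> {set S}) :
  is_group mul one inv ->
  (* S is a finite symmetric subset of G *)
  injective ev ->
  (forall s, exists s', ev s' = inv (ev s)) ->
  (* G = < S | R >, relators of length 2 or 3 *)
  all (fun r => size r \in [:: 2; 3]) R ->
  (forall g, exists l : seq S, gprod mul one (map ev l) = g) ->
  (forall r, r \in R -> gprod mul one (map ev r) = one) ->
  (forall w : seq (S * bool), weval mul one inv ev w = one ->
     exists N, area_le (fun _ => True)
                 (fun r => exists2 r0, r0 \in R & r = posw r0) w N) ->
  (* H_i <= G, S_i \subset S finite symmetric generating set of H_i *)
  (forall i, is_subgroup mul one inv (H i)) ->
  (forall i s, s \in Si i -> exists2 s', s' \in Si i & ev s' = inv (ev s)) ->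
  (forall i a, H i a <->
     exists l : seq S, all (fun s => s \in Si i) l /\ gprod mul one (map ev l) = a) ->
  (* linear isoperimetric inequality of factor K for X_infty *)
  Xinf_linear_isoperimetric mul one inv ev R H Si K ->
  forall (i : 'I_n) (s : S) (a : G), H i a -> ev s = a ->
    exists l : seq S, [/\ all (fun t => t \in Si i) l,
                          gprod mul one (map ev l) = a &
                          ((size l)%:R <= 12%:R * K)%R].
Proof.
move=> groupG _ _ _ _ R_trivial _ H_sub Si_sym _ iso i s a Ha ev_s.
have [_ mul1g mulg1 _ mulgV] := groupG.
set w : seq (letter S G n) := [:: LS s; LH i (inv a)].
have w_valid : List.Forall (valid_letter H) w.
  by repeat constructor; have [_ _ /(_ a Ha)] := H_sub i.
have w_trivial : weval mul one inv (letter_val ev (n := n)) (posw w) = one.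
  by rewrite /= mulg1 ev_s mulgV.
have [N [le_NK le_area]] := iso w w_valid w_trivial.
pose phi g := Posz (twlen mul one ev (Si i) N.+1 g).
have gain_w :
    gain mul inv (letter_val ev (n := n)) (in_factor i) phi one (posw w) = (- phi a)%R.
  by rewrite /= /wstep /= eqxx mul1g ev_s mulgV /phi twlen_one // add0r addr0 sub0r.
have := gain_le_area groupG R_trivial Si_sym i N.+1 one le_area.
rewrite gain_w normrN /phi => le_aN.
have lt_aN : twlen mul one ev (Si i) N.+1 a < N.+1 by lia.
have [l [size_l Si_l prod_l]] := twlen_spells lt_aN.
exists l; split => //.
have : ((size l)%:R <= N%:R :> R')%R by rewrite ler_nat size_l -ltnS.
have : (0 <= N%:R :> R')%R by exact: ler0n.
move: le_NK; rewrite [size w]/=; lra.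
Qed.
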